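(* Let $G=(V,E)$ be a finite graph, $A\subset V$ with $|A|$ even, $x_e>0$ and $p_e\in[0,1)$ for $e\in E$. Then for all $\omega\in\{0,1\}^E$, $$2^{|\omega|}(\ell^A_x\cup\mathbb{P}_p)[\omega]\propto\Big(\ell^A_{\frac{2x}{1+p}}\cup\mathbb{P}_{\frac{2p}{1+p}}\Big)[\omega].$$ In particular, if $J_e>0$ and $t_e=\tanh(J_e)$, then $2^{|\omega|}(\ell^A_t\cup\mathbb{P}_{t^2})[\omega]\propto\mathbf{P}^A_{2J}[\omega]$.
   Context: Configurations are identified with sets of open edges; $|\omega|$ is the number of open edges. $\partial F$ denotes the set of odd-degree vertices of $(V,F)$. For positive weights $y$, $\ell^A_y[\omega]\propto\prod_{e\in\omega}y_e\mathbf{1}[\partial\omega=A]$. $\mathbb{P}_r$ is Bernoulli percolation with edge $e$ open with probability $r_e$; vector operations are coordinatewise. $\pi\cup\nu$ is the law of the union of independent samples of $\pi,\nu$. $\mathbf{P}^A_{2J}$ is the single random current with sources $A$ and couplings $(2J_e)$: the law of $\{e:n_e>0\}$ for independent $n_e\sim$ Poisson$(2J_e)$ conditioned on the set of vertices $v$ with $\sum_{e\ni v}n_e$ odd being $A$. The proportionality is as functions of $\omega$ (both sides assumed defined). *)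

From HB Require Import structures.
From mathcomp Require Import all_boot all_order all_algebra.
From mathcomp Require Import all_classical all_reals all_analysis.
Set Implicit Arguments. Unset Strict Implicit. Unset Printing Implicit Defensive.
Import Order.TTheory GRing.Theory Num.Theory.
Local Open Scope ring_scope.

(* A finite (multi)graph: vertex type V, edge type E, each edge e having
   endpoints src e and tgt e.  Configurations are sets of open edges. *)
Section Defs.
Context {R : realType} {V E : finType} (src tgt : E -> V).

Definition incident (v : V) (e : E) : bool := (src e == v) || (tgt e == v).

Definition bdry (F : {set E}) : {set V} :=
  [set v | odd #|[set e in F | incident v e]|].

Definition ell_weight (A : {set V}) (y : E -> R) (w : {set E}) : R :=
  if bdry w == A then \prod_(e in w) y e else 0.
Definition ell (A : {set V}) (y : E -> R) (w : {set E}) : R :=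
  ell_weight A y w / \sum_(w' : {set E}) ell_weight A y w'.

Definition bern (r : E -> R) (w : {set E}) : R :=
  \prod_(e in w) r e * \prod_(e in ~: w) (1 - r e).

Definition lunion (pi nu : {set E} -> R) (w : {set E}) : R :=
  \sum_(eta : {set E}) \sum_(xi : {set E} | eta :|: xi == w) pi eta * nu xi.

(* single random current P^A_{c}: law of {e : n_e > 0} for independent
   n_e ~ Poisson(c_e) conditioned on the odd-vertex set of n being A *)
Definition nbdry (n : {ffun E -> nat}) : {set V} :=
  [set v | odd (\sum_(e | incident v e) n e)%N].
Definition nsupp (n : {ffun E -> nat}) : {set E} := [set e | (0 < n e)%N].
Definition current_weight (A : {set V}) (c : E -> R) (w : {set E}) : \bar R :=
  \esum_(n in [set n : {ffun E -> nat} | nbdry n = A /\ nsupp n = w])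
     (\prod_(e : E) poisson_pmf (c e) (n e))%:E.
Definition current (A : {set V}) (c : E -> R) (w : {set E}) : R :=
  fine (current_weight A c w) / fine (\sum_(w' : {set E}) current_weight A c w').

Definition tanhR (x : R) : R := (expR x - expR (- x)) / (expR x + expR (- x)).

Definition propto (f g : {set E} -> R) : Prop :=
  exists2 c : R, 0 < c & forall w, f w = c * g w.

End Defs.

From HB Require Import structures.
From mathcomp Require Import all_boot all_order all_algebra.
From mathcomp Require Import all_classical all_reals all_analysis.
From mathcomp Require Import ring lra.
Set Implicit Arguments. Unset Strict Implicit. Unset Printing Implicit Defensive.
Import Order.TTheory GRing.Theory Num.Theory.
Local Open Scope ring_scope.

(* Both sides are sums, over the edge sets eta with boundary A, of products over the
   edges of a weight that depends only on whether e is in eta and whether e is in w.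
   For the union of ell^A_x and P_p these weights are x, 0, p, 1 - p at
   (e in eta, e in w) = (1,1), (1,0), (0,1), (0,0); multiplying by 2^|w| and dividing
   every edge by 1 + p gives the weights of 2x/(1+p) and 2p/(1+p).  For the current,
   the odd-degree set of n is the boundary of its odd edges, so grouping the Poisson
   variables by parity and positivity gives the edge weights
   e^-c (sinh c, 0, cosh c - 1, 1); for c = 2J and t = tanh J these are proportional
   to (2t, 0, 2t^2, 1 - t^2). *)

Section SetProducts.
Variables (R : comPzSemiRingType) (T : finType).

Lemma sum_set_prod (h : T -> bool -> R) :
  \sum_(S : {set T}) \prod_t h t (t \in S) = \prod_t (h t true + h t false).
Proof.
under [RHS]eq_bigr do rewrite -big_bool.
rewrite bigA_distr_bigA (reindex (fun f : {ffun T -> bool} => [set t | f t])) /=.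
  by apply: eq_bigr => f _; apply: eq_bigr => t _; rewrite inE.
exists (fun S : {set T} => [ffun t => t \in S]) => [f _|S _].
  by apply/ffunP => t; rewrite ffunE inE.
by apply/setP => t; rewrite inE ffunE.
Qed.

Lemma prod_nat_forall (b : T -> bool) : \prod_t ((b t)%:R : R) = [forall t, b t]%:R.
Proof.
case: (boolP [forall t, b t]) => [/forallP bT | /forallPn [t0 /negPf bt0]].
  by rewrite big1 // => t _; rewrite bT.
by rewrite (bigD1 t0) //= bt0 mul0r.
Qed.

Lemma exp_card_prod (r : R) (S : {set T}) :
  r ^+ #|S| = \prod_t (if t \in S then r else 1).
Proof. by rewrite -big_mkcond prodr_const. Qed.

End SetProducts.

Section Percolation.
Context {R : realType} {E : finType}.

Lemma bernE (p : E -> R) (xi : {set E}) :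
  bern p xi = \prod_e (if e \in xi then p e else 1 - p e).
Proof.
rewrite /bern big_mkcond [X in _ * X]big_mkcond -big_split /=.
apply: eq_bigr => e _.
by rewrite inE; case: (e \in xi); rewrite ?mulr1 ?mul1r.
Qed.

Lemma sum_bern_setU (p : E -> R) (eta w : {set E}) :
  \sum_(xi | eta :|: xi == w) bern p xi =
  \prod_e (if e \in eta then ((e \in w)%:R : R) else if e \in w then p e else 1 - p e).
Proof.
pose h e b := (((e \in eta) || b) == (e \in w))%:R * (if b then p e else 1 - p e).
transitivity (\sum_(xi : {set E}) \prod_e h e (e \in xi) : R).
  rewrite big_mkcond /=; apply: eq_bigr => xi _.
  have -> : (eta :|: xi == w) = [forall e, ((e \in eta) || (e \in xi)) == (e \in w)].
    apply/eqP/forallP => [<- e | eq_w]; first by rewrite inE.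
    by apply/setP => e; rewrite inE; apply/eqP.
  by rewrite big_split /= prod_nat_forall bernE; case: [forall e, _]; rewrite ?mul1r ?mul0r.
rewrite sum_set_prod; apply: eq_bigr => e _; rewrite /h.
by case: (e \in eta); case: (e \in w); rewrite /= ?mul1r ?mul0r ?add0r ?addr0 //; ring.
Qed.

End Percolation.

Section SourcedSums.
Context {R : realType} {V E : finType} (src tgt : E -> V).
Implicit Types (A : {set V}) (w : {set E}).

Definition bdry_sum A (a : E -> bool -> bool -> R) w : R :=
  \sum_(eta | bdry src tgt eta == A) \prod_e a e (e \in eta) (e \in w).

Lemma eq_bdry_sum A (a b : E -> bool -> bool -> R) w :
  (forall e b1 b2, a e b1 b2 = b e b1 b2) -> bdry_sum A a w = bdry_sum A b w.
Proof.
by move=> ab; apply: eq_bigr => eta _; apply: eq_bigr => e _; apply: ab.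
Qed.

Lemma bdry_sum_scale A (a : E -> bool -> bool -> R) (k : E -> bool -> R) w :
  \prod_e k e (e \in w) * bdry_sum A a w =
  bdry_sum A (fun e b1 b2 => k e b2 * a e b1 b2) w.
Proof. by rewrite /bdry_sum mulr_sumr; apply: eq_bigr => eta _; rewrite -big_split. Qed.

Lemma bdry_sum_ge0 A (a : E -> bool -> bool -> R) w :
  (forall e b1 b2, 0 <= a e b1 b2) -> 0 <= bdry_sum A a w.
Proof. by move=> a_ge0; apply: sumr_ge0 => eta _; apply: prodr_ge0. Qed.

Lemma sum_bdry_sum_gt0 A (a : E -> bool -> bool -> R) :
  (exists F, bdry src tgt F = A) ->
  (forall e b1 b2, 0 <= a e b1 b2) -> (forall e b, 0 < a e b b) ->
  0 < \sum_w bdry_sum A a w.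
Proof.
move=> [F bdF] a_ge0 a_gt0; rewrite (bigD1 F) //=; apply: ltr_wpDr.
  by apply: sumr_ge0 => w _; apply: bdry_sum_ge0.
rewrite /bdry_sum (bigD1 F) /= ?bdF //; apply: ltr_wpDr; last exact: prodr_gt0.
by apply: sumr_ge0 => eta _; apply: prodr_ge0.
Qed.

Lemma sum_ell_weight_gt0 A (x : E -> R) : (exists F, bdry src tgt F = A) ->
  (forall e, 0 < x e) -> 0 < \sum_w ell_weight src tgt A x w.
Proof.
move=> [F bdF] x_gt0; rewrite (bigD1 F) //=; apply: ltr_wpDr.
  apply: sumr_ge0 => w _; rewrite /ell_weight; case: ifP => // _.
  by apply: prodr_ge0 => e _; apply: ltW.
by rewrite /ell_weight bdF eqxx prodr_gt0.
Qed.

Definition union_factor (x p : R) (b1 b2 : bool) : R :=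
  if b1 then (if b2 then x else 0) else (if b2 then p else 1 - p).

Lemma lunion_ell_bernE A (x p : E -> R) w :
  lunion (ell src tgt A x) (bern p) w =
  bdry_sum A (fun e => union_factor (x e) (p e)) w / \sum_w' ell_weight src tgt A x w'.
Proof.
rewrite /lunion /ell /bdry_sum mulr_suml [RHS]big_mkcond /=.
apply: eq_bigr => eta _; rewrite -mulr_sumr sum_bern_setU /ell_weight.
case: (bdry src tgt eta == A); last by rewrite !mul0r.
rewrite mulrAC big_mkcond -big_split /=; congr (_ * _); apply: eq_bigr => e _.
by rewrite /union_factor; case: (e \in eta); case: (e \in w); rewrite ?mul1r ?mulr1 ?mulr0.
Qed.

Lemma union_factor_double (x p : R) b1 b2 : 1 + p != 0 ->
  (if b2 then 2 else 1) * union_factor x p b1 b2 =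
  (1 + p) * union_factor (2 * x / (1 + p)) (2 * p / (1 + p)) b1 b2.
Proof. by move=> p1; case: b1; case: b2; rewrite /union_factor; field. Qed.

Lemma lunion_ell_bern_double_propto A (x p : E -> R) :
  (exists F, bdry src tgt F = A) ->
  (forall e, 0 < x e) -> (forall e, 0 <= p e < 1) ->
  propto (fun w => 2 ^+ #|w| * lunion (ell src tgt A x) (bern p) w)
         (lunion (ell src tgt A (fun e => 2 * x e / (1 + p e)))
                 (bern (fun e => 2 * p e / (1 + p e)))).
Proof.
move=> hA x_gt0 p01.
pose y e := 2 * x e / (1 + p e); pose q e := 2 * p e / (1 + p e).
have p_ge0 e : 0 <= p e by case/andP: (p01 e).
have p1_gt0 e : 0 < 1 + p e by have := p_ge0 e; lra.
have Zx := sum_ell_weight_gt0 hA x_gt0.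
have Zy : 0 < \sum_w ell_weight src tgt A y w.
  by apply: sum_ell_weight_gt0 => // e; rewrite divr_gt0 ?mulr_gt0.
exists (\prod_e (1 + p e) * (\sum_w ell_weight src tgt A y w) /
        \sum_w ell_weight src tgt A x w).
  by rewrite divr_gt0 ?mulr_gt0 ?prodr_gt0.
move=> w; rewrite !lunion_ell_bernE exp_card_prod mulrA.
rewrite (bdry_sum_scale _ _ (fun _ b => if b then 2 else 1)).
rewrite (eq_bdry_sum _ (b := fun e b1 b2 => (1 + p e) * union_factor (y e) (q e) b1 b2)).
  by rewrite -(bdry_sum_scale _ _ (fun e _ => 1 + p e)); field; rewrite !gt_eqF.
by move=> e b1 b2; rewrite union_factor_double // gt_eqF.
Qed.

End SourcedSums.

Section ExtendedSums.
Context {R : realType}.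
Local Open Scope ereal_scope.

Lemma esumZl (T : choiceType) (I : set T) (a : T -> \bar R) (r : R) :
  (0 <= r)%R -> (forall i, 0 <= a i) ->
  \esum_(i in I) (r%:E * a i) = r%:E * \esum_(i in I) a i.
Proof.
move=> r_ge0 a_ge0; rewrite /esum -ereal_supZl //; last first.
  by apply/set0P; exists (\sum_(i \in set0) a i), set0 => //; exact: fsets_set0.
congr ereal_sup; apply/seteqP; split => y /=.
  by case=> X XI <-; exists (\sum_(i \in X) a i); [exists X | rewrite ge0_mule_fsumr].
by case=> z [X XI <-] <-; exists X => //; rewrite ge0_mule_fsumr.
Qed.

End ExtendedSums.

Section ProductEsum.
Context {R : realType} {T : finType}.
Variables (P : T -> nat -> bool) (g : T -> nat -> R) (s : T -> R).
Hypothesis g_ge0 : forall t k, (0 <= g t k)%R.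
Hypothesis esum_g : forall t, \esum_(k in [set k | P t k]) (g t k)%:E = (s t)%:E.
Local Open Scope classical_set_scope.
Local Open Scope ereal_scope.

Lemma s_ge0 t : (0 <= s t)%R.
Proof. by rewrite -lee_fin -esum_g; apply: esum_ge0 => k _; rewrite lee_fin. Qed.

Definition ffuns_on (S : {set T}) : set {ffun T -> nat} :=
  [set n | forall t, if t \in S then P t (n t) else n t == 0%N].

Lemma set_bij_ffuns_on (S : {set T}) t0 : t0 \in S ->
  set_bij ([set k | P t0 k] `*`` (fun=> ffuns_on (S :\ t0))) (ffuns_on S)
          (fun kn => [ffun t => if t == t0 then kn.1 else kn.2 t]).
Proof.
move=> St0; split.
- move=> [k n] /= [Pk Sn] t; rewrite ffunE.
  case: (eqVneq t t0) => [->|ne]; first by rewrite St0.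
  by have := Sn t; rewrite !inE ne.
- move=> [k n] [k' n']; rewrite !in_setE /= => -[_ Sn] [_ Sn'] /ffunP eq_nn'.
  have := eq_nn' t0; rewrite !ffunE eqxx => <-; congr pair; apply/ffunP => t.
  case: (eqVneq t t0) => [->|ne].
    by have := Sn t0; have := Sn' t0; rewrite !inE eqxx /= => /eqP-> /eqP->.
  by have := eq_nn' t; rewrite !ffunE (negPf ne).
- move=> m Sm; exists (m t0, [ffun t => if t == t0 then 0%N else m t]).
    split=> [|t] /=; first by have := Sm t0; rewrite St0.
    by rewrite ffunE !inE; have := Sm t; case: (t == t0).
  by apply/ffunP => t; rewrite !ffunE; case: eqVneq => [->|].
Qed.

Lemma esum_ffuns_on (S : {set T}) :
  \esum_(n in ffuns_on S) (\prod_(t in S) g t (n t))%:E = (\prod_(t in S) s t)%:E.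
Proof.
elim: {S}_.+1 {-2}S (ltnSn #|S|) => // m IH S; rewrite ltnS => leSm.
have [->|[t0 St0]] := set_0Vmem S.
  have -> : ffuns_on finset.set0 = [set [ffun=> 0%N]].
    apply/seteqP; split => n /=; last by move=> -> t; rewrite inE ffunE.
    by move=> n0; apply/ffunP => t; rewrite ffunE; have := n0 t; rewrite inE => /eqP.
  by rewrite esum_set1 !big_set0.
have bigD1S (F : T -> R) : (\prod_(t in S) F t = F t0 * \prod_(t in S :\ t0) F t)%R.
  by rewrite (big_setD1 t0).
rewrite (@reindex_esum _ _ _ _ _ _ _ (set_bij_ffuns_on St0)).
transitivity (\esum_(kn in [set k | P t0 k] `*`` (fun=> ffuns_on (S :\ t0)))
   ((g t0 kn.1)%:E * (\prod_(t in S :\ t0) g t (kn.2 t))%:E)).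
  apply: eq_esum => -[k n] _ /=; rewrite bigD1S ffunE eqxx EFinM.
  congr (_ * (_%:E)); apply: eq_bigr => t; rewrite !inE => /andP [ne _].
  by rewrite ffunE (negPf ne).
rewrite -(esum_esum (a := fun (k : nat) (n : {ffun T -> nat}) =>
                            (g t0 k)%:E * (\prod_(t in S :\ t0) g t (n t))%:E)); last first.
  by move=> k n _ _; rewrite -EFinM lee_fin mulr_ge0 ?prodr_ge0.
have IHS : \esum_(n in ffuns_on (S :\ t0)) (\prod_(t in S :\ t0) g t (n t))%:E
    = (\prod_(t in S :\ t0) s t)%:E.
  by apply: IH; move: leSm; rewrite (cardsD1 t0 S) St0.
have inner k : \esum_(n in ffuns_on (S :\ t0))
    ((g t0 k)%:E * (\prod_(t in S :\ t0) g t (n t))%:E)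
    = (\prod_(t in S :\ t0) s t)%:E * (g t0 k)%:E.
  by rewrite esumZl ?IHS 1?muleC // => n; rewrite lee_fin prodr_ge0.
rewrite (eq_esum (fun k _ => inner k)) esumZl ?esum_g; last 2 first.
- by apply: prodr_ge0 => t _; apply: s_ge0.
- by move=> k; rewrite lee_fin.
by rewrite bigD1S -EFinM mulrC.
Qed.

Lemma esum_ffun_prod :
  \esum_(n in [set n : {ffun T -> nat} | forall t, P t (n t)]) (\prod_t g t (n t))%:E
  = (\prod_t s t)%:E.
Proof.
have prodT (F : T -> R) : (\prod_(t in [set: T]%SET) F t = \prod_t F t)%R.
  by apply: eq_bigl => t; rewrite finset.in_setT.
have -> : [set n : {ffun T -> nat} | forall t, P t (n t)] = ffuns_on [set: T].
  by apply/seteqP; split => n Pn t; move: (Pn t); rewrite finset.in_setT.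
have := esum_ffuns_on [set: T]; rewrite prodT => <-.
by apply: eq_esum => n _; rewrite prodT.
Qed.

End ProductEsum.

Import numFieldNormedType.Exports.

Section PoissonParity.
Context {R : realType}.
Local Open Scope classical_set_scope.

Lemma poisson_pmfE (c : R) k : 0 < c -> poisson_pmf c k = expR (- c) * exp_coeff c k.
Proof. by move=> c_gt0; rewrite /poisson_pmf c_gt0 /exp_coeff /=; ring. Qed.

Lemma cvg_series_exp_coeff_parity (b : bool) (c : R) :
  series (fun k => if odd k == b then exp_coeff c k else 0) @ \oo -->
  (expR c + (-1) ^+ b * expR (- c)) / 2.
Proof.
have -> : series (fun k => if odd k == b then exp_coeff c k else 0) =
    (fun n => 2^-1 * series (exp_coeff c) n + (-1) ^+ b / 2 * series (exp_coeff (- c)) n).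
  apply/funext => n; rewrite /series /= !mulr_sumr -big_split /=.
  apply: eq_bigr => k _; rewrite /exp_coeff /= [(- c) ^+ _]exprNn -[(-1) ^+ k]signr_odd.
  by case: (odd k); case: b; rewrite /= ?expr0 ?expr1; field.
rewrite (_ : (expR c + _) / 2 = 2^-1 * expR c + (-1) ^+ b / 2 * expR (- c)); last by ring.
by apply: cvgD; apply: cvgMl_tmp; apply: is_cvg_series_exp_coeff.
Qed.

Definition parity_mass (c : R) (odd_k pos_k : bool) : R :=
  expR (- c) * if odd_k then (if pos_k then (expR c - expR (- c)) / 2 else 0)
               else (if pos_k then (expR c + expR (- c)) / 2 - 1 else 1).

Local Open Scope ereal_scope.

Lemma esum_nat_series (Q : pred nat) (a : nat -> R) (L : R) : (forall k, 0 <= a k)%R ->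
  series (fun k => if Q k then a k else 0%R) @ \oo --> L ->
  \esum_(k in [set k | Q k]) (a k)%:E = L%:E.
Proof.
move=> a_ge0 aL; rewrite -nneseries_esum; last by move=> k _; rewrite lee_fin.
have -> : (fun n => \sum_(0 <= k < n | Q k) (a k)%:E) =
    EFin \o series (fun k => if Q k then a k else 0%R).
  by apply/funext => n; rewrite /series /= sumEFin big_mkcond.
by rewrite EFin_lim ?(cvg_lim _ aL) //; apply/cvg_ex; exists L.
Qed.

Lemma esum_poisson_pmf (Q : pred nat) (c L : R) : (0 < c)%R ->
  series (fun k => if Q k then exp_coeff c k else 0%R) @ \oo --> L ->
  \esum_(k in [set k | Q k]) (poisson_pmf c k)%:E = (expR (- c) * L)%:E.
Proof.
move=> c_gt0 cL; have c_ge0 := ltW c_gt0.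
under eq_esum do rewrite poisson_pmfE // EFinM.
rewrite esumZl ?expR_ge0 // => [|k]; last by rewrite lee_fin exp_coeff_ge0.
by rewrite (esum_nat_series _ cL) // => k; apply: exp_coeff_ge0.
Qed.

Lemma esum_poisson_parity (c : R) (b1 b2 : bool) : (0 < c)%R ->
  \esum_(k in [set k | (odd k == b1) && ((0 < k)%N == b2)]) (poisson_pmf c k)%:E
  = (parity_mass c b1 b2)%:E.
Proof.
move=> c_gt0; have pmf_ge0 k : 0 <= (poisson_pmf c k)%:E by rewrite lee_fin poisson_pmf_ge0.
have pmf0 : poisson_pmf c 0 = expR (- c).
  by rewrite poisson_pmfE // /exp_coeff /= expr0 fact0 divr1 mulr1.
rewrite /parity_mass; case: b1; case: b2.
- rewrite (_ : [set k | _] = [set k | odd k == true]); last first.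
    by apply/seteqP; split => -[|k] //=; rewrite andbT.
  rewrite (esum_poisson_pmf c_gt0 (cvg_series_exp_coeff_parity (b := true) (c := c))).
  by rewrite expr1 mulN1r.
- rewrite (_ : [set k | _] = set0) ?esum_set0 ?mulr0 //.
  by apply/seteqP; split => -[|k] //=; rewrite andbF.
- have := esumID [set 0%N] [set k | odd k == false] (fun k => (poisson_pmf c k)%:E)
                 (fun k _ => pmf_ge0 k).
  rewrite (_ : _ `&` [set 0%N] = [set 0%N]); last by apply/seteqP; split => [k [_ ->]|k ->].
  rewrite (_ : _ `&` ~` _ = [set k | (odd k == false) && ((0 < k)%N == true)]); last first.
    by apply/seteqP; split => -[|k] //=;
      [case=> _ /(_ erefl) | case=> -> | rewrite andbT => /eqP ->].
  rewrite (esum_poisson_pmf c_gt0 (cvg_series_exp_coeff_parity (b := false) (c := c))).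
  rewrite esum_set1 // pmf0.
  move=> /(congr1 (fun x => x - (expR (- c))%:E)); rewrite addeC addeK // => <-.
  by rewrite -EFinB; congr EFin; rewrite expr0 mul1r; ring.
- rewrite (_ : [set k | _] = [set 0%N]) ?esum_set1 ?pmf0 ?mulr1 //.
  by apply/seteqP; split => -[|k] //=; rewrite andbF.
Qed.

End PoissonParity.

Section Currents.
Context {R : realType} {V E : finType} (src tgt : E -> V).
Implicit Types (A : {set V}) (w : {set E}).

Lemma nbdry_odd (n : {ffun E -> nat}) : nbdry src tgt n = bdry src tgt [set e | odd (n e)].
Proof.
apply/setP => v; rewrite !inE -sum1_card !(big_morph odd oddD (erefl : odd 0 = false)).
rewrite [RHS](eq_bigl (fun e => incident src tgt v e && odd (n e))) => [|e]; last first.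
  by rewrite !inE andbC.
by rewrite [RHS]big_mkcondr; apply: eq_bigr => e _; case: odd.
Qed.

Definition current_class (eta w : {set E}) : set {ffun E -> nat} :=
  [set n | forall e, (odd (n e) == (e \in eta)) && ((0 < n e)%N == (e \in w))].

Lemma in_current_class eta w n :
  (n \in current_class eta w) = (eta == [set e | odd (n e)]) && (nsupp n == w).
Proof.
apply/idP/andP => [/[!in_setE] cl | [/eqP -> /eqP <-]].
  by split; apply/eqP/setP => e; have /andP[/eqP odd_e /eqP pos_e] := cl e; rewrite !inE.
by rewrite in_setE => e; rewrite !inE !eqxx.
Qed.

Local Open Scope ereal_scope.

Lemma current_weight_classes A (c : E -> R) w :
  current_weight src tgt A c w =
  \sum_(eta | bdry src tgt eta == A)
     \esum_(n in current_class eta w) (\prod_e poisson_pmf (c e) (n e))%:E.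
Proof.
pose f (n : {ffun E -> nat}) := (\prod_e poisson_pmf (c e) (n e))%:E.
have f_ge0 n : 0 <= f n by rewrite lee_fin prodr_ge0 // => e _; apply: poisson_pmf_ge0.
have sum_classes n :
    (if n \in [set n : {ffun E -> nat} | nbdry src tgt n = A /\ nsupp n = w]%classic
     then f n else 0)
    = \sum_(eta | bdry src tgt eta == A) (if n \in current_class eta w then f n else 0).
  set lhs := (X in X = _).
  rewrite big_mkcond /= (eq_bigr (fun eta => if eta == [set e | odd (n e)] then lhs else 0)).
    by rewrite -big_mkcond big_pred1_eq.
  move=> eta _; rewrite /lhs in_current_class.
  have -> : (n \in [set n : {ffun E -> nat} | nbdry src tgt n = A /\ nsupp n = w]%classic)
      = (nbdry src tgt n == A) && (nsupp n == w).
    by apply/idP/andP => [/set_mem [-> ->] | [/eqP bdA /eqP supp]]; last exact: mem_set.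
  case: (eqVneq eta [set e | odd (n e)]) => [-> | _]; last by case: ifP.
  by rewrite nbdry_odd; case: ifP.
rewrite /current_weight esum_mkcond.
under eq_esum do rewrite sum_classes.
rewrite esum_sum; last by move=> n eta _ _; case: ifP.
by apply: eq_bigr => eta _; rewrite [RHS]esum_mkcond.
Qed.

Lemma current_weightE A (c : E -> R) w : (forall e, 0 < c e)%R ->
  current_weight src tgt A c w = (bdry_sum src tgt A (fun e => parity_mass (c e)) w)%:E.
Proof.
move=> c_gt0; rewrite current_weight_classes /bdry_sum -sumEFin; apply: eq_bigr => eta _.
apply: (esum_ffun_prod (P := fun e k => (odd k == (e \in eta)) && ((0 < k)%N == (e \in w)))
                       (g := fun e => poisson_pmf (c e))
                       (s := fun e => parity_mass (c e) (e \in eta) (e \in w))).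
- by move=> e k; apply: poisson_pmf_ge0.
- by move=> e; apply: esum_poisson_parity.
Qed.

Local Close Scope ereal_scope.

Lemma currentE A (c : E -> R) w : (forall e, 0 < c e) ->
  current src tgt A c w = bdry_sum src tgt A (fun e => parity_mass (c e)) w /
                          \sum_w' bdry_sum src tgt A (fun e => parity_mass (c e)) w'.
Proof.
move=> c_gt0; rewrite /current current_weightE //=; congr (_ / _).
rewrite (eq_bigr _ (fun w' _ => current_weightE A w' c_gt0)).
by rewrite sumEFin.
Qed.

End Currents.

Section Tanh.
Context {R : realType}.

Lemma tanhR_gt0_lt1 (J : R) : 0 < J -> 0 < tanhR J < 1.
Proof.
move=> J_gt0; rewrite /tanhR expRN.
have a_gt1 : 1 < expR J by rewrite expR_gt1.
have ai : 0 < (expR J)^-1 < 1 by rewrite invr_gt0 expR_gt0 invf_lt1 ?expR_gt0.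
by rewrite divr_gt0 ?ltr_pdivrMr /=; lra.
Qed.

Lemma parity_mass_tanh (J : R) b1 b2 : 0 < J ->
  parity_mass (2 * J) b1 b2 = expR (- (2 * J)) / (1 - tanhR J ^+ 2) *
    ((if b2 then 2 else 1) * union_factor (tanhR J) (tanhR J ^+ 2) b1 b2).
Proof.
move=> J_gt0; rewrite /parity_mass /union_factor /tanhR !expRN.
rewrite (_ : 2 * J = J + J) ?expRD; last by ring.
have a_gt1 : 1 < expR J by rewrite expR_gt1.
set a := expR J in a_gt1 *.
have a0 : a != 0 by rewrite gt_eqF //; lra.
have side : [&& a * a + 1 != 0 & (a * a + 1) ^+ 2 - (a * a - 1) ^+ 2 != 0].
  by apply/andP; split; rewrite gt_eqF // ?expr2; nra.
by case: b1; case: b2; field; rewrite a0.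
Qed.

End Tanh.

Lemma lunion_tanh_current_propto {R : realType} {V E : finType} (src tgt : E -> V)
    (A : {set V}) (J : E -> R) :
  (exists F, bdry src tgt F = A) -> (forall e, 0 < J e) ->
  propto (fun w => 2 ^+ #|w| * lunion (ell src tgt A (fun e => tanhR (J e)))
                                      (bern (fun e => tanhR (J e) ^+ 2)) w)
         (current src tgt A (fun e => 2 * J e)).
Proof.
move=> hA J_gt0.
pose t e := tanhR (J e).
pose u e b1 b2 := (if b2 then 2 else 1) * union_factor (t e) (t e ^+ 2) b1 b2.
pose K e := expR (- (2 * J e)) / (1 - t e ^+ 2).
have t01 e : 0 < t e < 1 := tanhR_gt0_lt1 (J_gt0 e).
have t_gt0 e : 0 < t e by case/andP: (t01 e).
have K_gt0 : 0 < \prod_e K e.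
  by apply: prodr_gt0 => e _; have /andP[? ?] := t01 e; rewrite divr_gt0 ?expR_gt0 //; nra.
have Wu_gt0 : 0 < \sum_w bdry_sum src tgt A u w.
  apply: sum_bdry_sum_gt0 => // e; have /andP[? ?] := t01 e.
    by move=> [] []; rewrite /u /union_factor /=; nra.
  by case; rewrite /u /union_factor /=; nra.
have Zt := sum_ell_weight_gt0 hA t_gt0.
have massE w : bdry_sum src tgt A (fun e => parity_mass (2 * J e)) w =
               \prod_e K e * bdry_sum src tgt A u w.
  rewrite (bdry_sum_scale _ _ _ _ (fun e _ => K e)).
  by apply: eq_bdry_sum => e b1 b2; apply: parity_mass_tanh.
exists ((\sum_w bdry_sum src tgt A u w) / \sum_w ell_weight src tgt A t w).
  exact: divr_gt0.
move=> w; rewrite currentE /= => [|e]; last by rewrite mulr_gt0.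
rewrite (eq_bigr _ (fun w' _ => massE w')) massE -mulr_sumr.
rewrite lunion_ell_bernE exp_card_prod mulrA.
rewrite (bdry_sum_scale _ _ _ _ (fun _ b => if b then 2 else 1)) -/t.
by field; rewrite !gt_eqF.
Qed.

Theorem lemmaA2 (R : realType) (V E : finType) (src tgt : E -> V)
  (noloop : forall e, src e != tgt e)
  (A : {set V}) (hA : ~~ odd #|A|)
  (hdef : exists F : {set E}, bdry src tgt F = A) :
  (forall (x p : E -> R), (forall e, 0 < x e) -> (forall e, 0 <= p e < 1) ->
     propto (fun w => 2 ^+ #|w| * lunion (ell src tgt A x) (bern p) w)
            (lunion (ell src tgt A (fun e => 2 * x e / (1 + p e)))
                    (bern (fun e => 2 * p e / (1 + p e))))) /\
  (forall (J : E -> R), (forall e, 0 < J e) ->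
     propto (fun w => 2 ^+ #|w| *
               lunion (ell src tgt A (fun e => tanhR (J e)))
                      (bern (fun e => tanhR (J e) ^+ 2)) w)
            (current src tgt A (fun e => 2 * J e))).
Proof.
split=> [x p | J].
- exact: lunion_ell_bern_double_propto.
- exact: lunion_tanh_current_propto.
Qed.
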